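(* Let $\Gamma$ be the bipartite graph with vertex set $\{L_1,\dots,L_{12}\}\sqcup\{M_1,\dots,M_{12}\}$, where no two $L$'s and no two $M$'s are adjacent, and $L_i$ is adjacent to $M_j$ if and only if $j\in N(i)$, with $N(1)=\{1,2,6,8,9,12\}$, $N(2)=\{1,2,5,7,10,11\}$, $N(3)=\{3,4,6,8,10,11\}$, $N(4)=\{3,4,5,7,9,12\}$, $N(5)=\{2,4,5,6,10,12\}$, $N(6)=\{1,3,5,6,9,11\}$, $N(7)=\{2,4,7,8,9,11\}$, $N(8)=\{1,3,7,8,10,12\}$, $N(9)=\{1,4,6,7,9,10\}$, $N(10)=\{2,3,5,8,9,10\}$, $N(11)=\{2,3,6,7,11,12\}$, $N(12)=\{1,4,5,8,11,12\}$. Let $S=\mathbb{Z}\Gamma/\operatorname{rad}(\mathbb{Z}\Gamma)$, where $\mathbb{Z}\Gamma$ is the free abelian group on the vertices with Gram matrix $A-2\mathbb{I}_{24}$ ($A$ the adjacency matrix). Then the discriminant quadratic form $q\colon S^\vee/S\to\mathbb{Q}/2\mathbb{Z}$, $q(x)=x^2 \bmod 2\mathbb{Z}$, on the discriminant group $S^\vee/S\cong(\mathbb{Z}/2\mathbb{Z})^{\oplus4}\oplus\mathbb{Z}/16\mathbb{Z}$ is given by the Gram matrix $$\begin{bmatrix}0&\tfrac12\\ \tfrac12&0\end{bmatrix}\oplus\begin{bmatrix}0&\tfrac12\\ \tfrac12&0\end{bmatrix}\oplus\begin{bmatrix}\tfrac{3}{16}\end{bmatrix},$$ where the diagonal entries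 are taken modulo $2\mathbb{Z}$ and the off-diagonal entries modulo $\mathbb{Z}$.
   Context: $\operatorname{rad}$ denotes the kernel of the bilinear form; $S^\vee=\operatorname{Hom}(S,\mathbb{Z})\subset S\otimes\mathbb{Q}$ is the dual lattice. *)

From mathcomp Require Import all_boot all_order all_algebra.
Set Implicit Arguments. Unset Strict Implicit. Unset Printing Implicit Defensive.
Import Order.TTheory GRing.Theory Num.Theory.
Local Open Scope ring_scope.

(* Vertices of Gamma indexed by 'I_24: vertex k < 12 is L_(k+1),
   vertex 12 + j (j < 12) is M_(j+1). *)
Definition Nbr (i : nat) : seq nat :=
  match i with
  | 1 => [:: 1; 2; 6; 8; 9; 12]%N
  | 2 => [:: 1; 2; 5; 7; 10; 11]%N
  | 3 => [:: 3; 4; 6; 8; 10; 11]%N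
  | 4 => [:: 3; 4; 5; 7; 9; 12]%N
  | 5 => [:: 2; 4; 5; 6; 10; 12]%N
  | 6 => [:: 1; 3; 5; 6; 9; 11]%N
  | 7 => [:: 2; 4; 7; 8; 9; 11]%N
  | 8 => [:: 1; 3; 7; 8; 10; 12]%N
  | 9 => [:: 1; 4; 6; 7; 9; 10]%N
  | 10 => [:: 2; 3; 5; 8; 9; 10]%N
  | 11 => [:: 2; 3; 6; 7; 11; 12]%N
  | 12 => [:: 1; 4; 5; 8; 11; 12]%N
  | _ => [::]
  end.

Definition adj (u v : 'I_24) : bool :=
  [&& (u < 12)%N, (12 <= v)%N & ((v - 12).+1 \in Nbr u.+1)] ||
  [&& (v < 12)%N, (12 <= u)%N & ((u - 12).+1 \in Nbr v.+1)].

Definition gramG : 'M[rat]_24 :=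
  \matrix_(i, j) ((adj i j)%:R - ((i == j)%:R *+ 2)).

Definition bform (x y : 'cV[rat]_24) : rat := (x^T *m gramG *m y) 0 0.

Definition is_int_vec (x : 'cV[rat]_24) : Prop := forall i, x i 0 \is a Num.int.

Definition radQ (x : 'cV[rat]_24) : Prop := gramG *m x = 0.

(* lifts to Q^24 of elements of S^vee (inside S (x) Q = Q^24 / rad) *)
Definition inDual (x : 'cV[rat]_24) : Prop := is_int_vec (gramG *m x).

(* lifts to Q^24 of elements of S = Z Gamma / rad(Z Gamma) *)
Definition inS (x : 'cV[rat]_24) : Prop :=
  exists z w, is_int_vec z /\ radQ w /\ x = z + w.

Definition eqmod2 (a b : rat) : Prop := exists k : int, a - b = (2 * k)%:~R.

(* the quadratic form with Gram matrix U(1/2) + U(1/2) + <3/16>, on integer lifts *)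
Definition Qtarget (c1 c2 c3 c4 c5 : int) : rat :=
  (c1 * c2 + c3 * c4)%:~R + (3%:R / 16%:R) * (c5 ^+ 2)%:~R.

Definition lincomb (g1 g2 g3 g4 g5 : 'cV[rat]_24) (c1 c2 c3 c4 c5 : int) : 'cV[rat]_24 :=
  g1 *~ c1 + g2 *~ c2 + g3 *~ c3 + g4 *~ c4 + g5 *~ c5.

From mathcomp Require Import all_boot all_order all_algebra.
From mathcomp Require Import zify ring.
Set Implicit Arguments. Unset Strict Implicit. Unset Printing Implicit Defensive.
Import Order.TTheory GRing.Theory Num.Theory.
Local Open Scope ring_scope.

(* Write F = gramG and G = (g_1 ... g_5) for five explicit vectors of Q^24.
   Integer matrices C and Z with F (G C + Z) F = F show that every x with F x
   integral is congruent to G (C F x) modulo Z^24 + rad F, so the g_k generate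
   S^vee / S.  Conversely, if G c lies in Z^24 + rad F, then G^T F G c is
   integral because F G is; since 16 G^T F G is an explicit integer matrix,
   reducing modulo 16 forces 2 | c_1, ..., c_4 and 16 | c_5, and these
   multiples of the g_k are integral vectors.  The discriminant form is then
   read off from G^T F G. *)

Section DualLattice.
Variables (R : archiNumDomainType) (n m : nat) (F : 'M[R]_n) (G : 'M[R]_(n, m)).

Lemma dual_mod_span (C : 'M[R]_(m, n)) (Z : 'M[R]_n) (x : 'cV[R]_n) :
  C \is a mxOver Num.int -> Z \is a mxOver Num.int ->
  F *m (G *m C + Z) *m F = F -> F *m x \is a mxOver Num.int ->
  exists2 z : 'cV[R]_n, z \is a mxOver Num.int &
    F *m (x - G *m (C *m (F *m x)) - z) = 0.
Proof.
move=> Cint Zint FPF Fx; exists (Z *m (F *m x)); first exact: mxOverM.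
by rewrite -addrA -opprD mulmxA -mulmxDl mulmxBr !mulmxA FPF subrr.
Qed.

Lemma pairing_mod_rad (x z : 'cV[R]_n) :
  F^T = F -> F *m G \is a mxOver Num.int ->
  z \is a mxOver Num.int -> F *m (x - z) = 0 ->
  G^T *m F *m x \is a mxOver Num.int.
Proof.
move=> Fsym /mxOverP FGint zint Fxz.
have GFint : G^T *m F \is a mxOver Num.int.
  by apply/mxOverP => i j; rewrite -[F]Fsym -trmx_mul mxE.
rewrite -(subrK z x) mulmxDr -[_ *m (x - z)]mulmxA Fxz mulmx0 add0r.
exact: mxOverM.
Qed.

End DualLattice.

Lemma dvdz_of_int_div (R : archiNumFieldType) (t : int) (d : nat) :
  d != 0%N -> (t%:~R / d%:R : R) \is a Num.int -> (d %| t)%Z.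
Proof.
move=> d0 /intrP [q tdq]; apply/dvdzP; exists q; apply/eqP.
rewrite -(eqr_int R) intrM -tdq -[d%:~R]/(d%:R) mulfVK //.
by rewrite pnatr_eq0.
Qed.

Lemma int_vecP (x : 'cV[rat]_24) : is_int_vec x <-> x \is a mxOver Num.int.
Proof.
split=> [xint | /mxOverP xint i]; last exact: xint.
by apply/mxOverP => i j; rewrite (ord1 j).
Qed.

Lemma inSP (x : 'cV[rat]_24) :
  inS x <-> exists2 z : 'cV[rat]_24, z \is a mxOver Num.int & gramG *m (x - z) = 0.
Proof.
split=> [[z [w [/int_vecP zint [radw ->]]]] | [z zint radxz]].
  by exists z => //; rewrite addrC addKr.
by exists z, (x - z); split; [exact/int_vecP | split=> //; rewrite addrC subrK].
Qed.

Section ComputableMatrix.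
Variable R : pzSemiRingType.

Definition mx_of_fun m n (f : nat -> nat -> R) : 'M[R]_(m, n) := \matrix_(i, j) f i j.

Definition sum_iota k (f : nat -> R) : R := foldr (fun l acc => f l + acc) 0 (iota 0 k).

Definition mulf k (f g : nat -> nat -> R) i j : R := sum_iota k (fun l => f i l * g l j).

Definition memo m n (f : nat -> nat -> R) : nat -> nat -> R :=
  let t := [seq [seq f i j | j <- iota 0 n] | i <- iota 0 m] in
  fun i j => nth 0 (nth [::] t i) j.

Definition all_entries m n (P : nat -> nat -> bool) : bool :=
  all (fun i => all (P i) (iota 0 n)) (iota 0 m).

Lemma big_ord_sum_iota k (f : nat -> R) : \sum_(l < k) f l = sum_iota k f.
Proof.
rewrite -(big_mkord xpredT) /sum_iota /index_iota subn0.
by elim: (iota 0 k) => [|a s IH]; rewrite ?big_nil // big_cons IH.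
Qed.

Lemma mx_of_funM m k n f g :
  mx_of_fun m k f *m mx_of_fun k n g = mx_of_fun m n (mulf k f g).
Proof.
apply/matrixP => i j; rewrite !mxE /mulf -big_ord_sum_iota.
by apply: eq_bigr => l _; rewrite !mxE.
Qed.

Lemma mx_of_funD m n f g :
  mx_of_fun m n f + mx_of_fun m n g = mx_of_fun m n (fun i j => f i j + g i j).
Proof. by apply/matrixP => i j; rewrite !mxE. Qed.

Lemma mx_of_fun_tr m n f : (mx_of_fun m n f)^T = mx_of_fun n m (fun i j => f j i).
Proof. by apply/matrixP => i j; rewrite !mxE. Qed.

Lemma mx_of_fun_memo m n f : mx_of_fun m n (memo m n f) = mx_of_fun m n f.
Proof.
apply/matrixP => i j; rewrite !mxE /memo.
by rewrite (nth_map 0%N) ?size_iota // (nth_map 0%N) ?size_iota // !nth_iota.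
Qed.

Lemma all_entriesP m n P (i : 'I_m) (j : 'I_n) : all_entries m n P -> P i j.
Proof.
by move=> /allP/(_ i); rewrite mem_iota ltn_ord => /(_ isT) /allP/(_ j);
  rewrite mem_iota ltn_ord => /(_ isT).
Qed.

Lemma mx_of_fun_eq m n f g :
  all_entries m n (fun i j => f i j == g i j) -> mx_of_fun m n f = mx_of_fun m n g.
Proof. by move=> fg; apply/matrixP => i j; rewrite !mxE; apply/eqP/(all_entriesP i j fg). Qed.

Lemma mx_of_fun_over (S : {pred R}) m n f :
  all_entries m n (fun i j => f i j \in S) -> mx_of_fun m n f \is a mxOver S.
Proof. by move=> fS; apply/mxOverP => i j; rewrite mxE; apply: all_entriesP fS. Qed.

End ComputableMatrix.

Definition gram_fun (i j : nat) : rat :=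
  ([&& (i < 12)%N, (12 <= j)%N & ((j - 12).+1 \in Nbr i.+1)] ||
   [&& (j < 12)%N, (12 <= i)%N & ((i - 12).+1 \in Nbr j.+1)])%:R - (i == j)%:R *+ 2.

Lemma gramGE : gramG = mx_of_fun 24 24 gram_fun.
Proof. by apply/matrixP => i j; rewrite !mxE. Qed.

Lemma gramG_sym : gramG^T = gramG.
Proof. by apply/matrixP => i j; rewrite !mxE /adj orbC eq_sym. Qed.

Definition tab (L : seq (seq int)) (i j : nat) : int := nth 0 (nth [::] L i) j.

(* Row k holds the entries of 16 g_(k+1). *)
Definition gens16 : seq (seq int) :=
  ([:: [:: 0; 0; 0; 0; 0; 0; 8; 8; 0; 8; 0; 8; 0; 0; 0; 0; 0; 0; 0; 0; 0; 0; 0; 0];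
     [:: 0; 0; 8; 8; 0; 0; 0; 0; 8; 0; 0; 8; 8; 0; 8; 0; 0; 0; 0; 0; 8; 0; 8; 0];
     [:: 0; 0; 0; 0; 0; 0; 0; 0; 0; 0; 0; 0; 8; 0; 8; 0; 0; 0; 0; 0; 8; 0; 8; 0];
     [:: 8; 0; 8; 0; 0; 8; 8; 0; 8; 0; 0; 8; 8; 0; 8; 0; 0; 0; 0; 0; 8; 0; 8; 0];
     [:: 5; 0; 13; 4; 0; 12; 8; 2; 2; 15; 0; 5; 5; 6; 15; 0; 10; 0; 0; 0; 15; 0; 11; 0]])%Z.

Definition dual_coords_tab : seq (seq int) :=
  ([:: [:: 0; 1; 1; 0; 1; 0; 0; 1; 0; 0; 0; 0; 1; 1; 0; 0; 1; 0; 1; 0; 0; 0; 0; 0];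
     [:: 0; 0; 0; 0; 1; 1; 0; 0; 1; 0; 1; 0; 0; 0; 0; 0; 0; 0; 0; 0; 0; 0; 0; 0];
     [:: 0; 0; 0; 0; 0; 0; 0; 0; 0; 0; 0; 0; 1; 1; 0; 0; 1; 0; 1; 0; 0; 0; 0; 0];
     [:: 1; 0; 1; 0; 0; 0; 0; 0; 1; 0; 1; 0; 0; 0; 0; 0; 0; 0; 0; 0; 0; 0; 0; 0];
     [:: 14; 12; 8; 0; 7; 1; 11; 15; 6; 0; 12; 0; 0; 12; 2; 0; 2; 0; 12; 0; 0; 0; 14; 0]])%Z.

Definition dual_corr_tab : seq (seq int) :=
  ([:: [:: -5; -3; -4; 0; -1; -1; -3; -5; -2; 0; -5; 0; 0; -3; -2; 0; 0; 0; -3; 0; 0; 0; -5; 0];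
     [:: 0; 0; 0; 0; 0; 0; 0; 0; 0; 0; 0; 0; 0; 0; 0; 0; 0; 0; 0; 0; 0; 0; 0; 0];
     [:: -12; -10; -7; 0; -7; -1; -9; -12; -6; 0; -10; 0; 0; -10; -1; 0; -2; 0; -10; 0; 0; 0; -11; 0];
     [:: -4; -4; -1; 0; -3; 0; -3; -3; -2; 0; -3; 0; 0; -4; 1; 0; -1; 0; -3; 0; 0; 0; -3; 0];
     [:: 0; 0; 0; 0; 0; 0; 0; 0; 0; 0; 0; 0; 0; 0; 0; 0; 0; 0; 0; 0; 0; 0; 0; 0];
     [:: -11; -9; -6; 0; -6; -1; -8; -11; -5; 0; -9; 0; 0; -9; -1; 0; -2; 0; -9; 0; 0; 0; -10; 0];
     [:: -7; -6; -6; 0; -3; -1; -6; -8; -3; 0; -7; 0; 0; -6; -2; 0; -1; 0; -6; 0; 0; 0; -8; 0];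
     [:: -2; -2; -1; 0; -2; 0; -1; -3; -1; 0; -1; 0; -1; -2; 0; 0; -1; 0; -2; 0; 0; 0; -1; 0];
     [:: -2; -1; -2; 0; -1; -1; -1; -2; -2; 0; -3; 0; 0; -1; -1; 0; 0; 0; -1; 0; 0; 0; -2; 0];
     [:: -13; -12; -8; 0; -6; -1; -10; -15; -6; 0; -11; 0; -1; -11; -2; 0; -2; 0; -12; 0; 0; 0; -13; 0];
     [:: 0; 0; 0; 0; 0; 0; 0; 0; 0; 0; 0; 0; 0; 0; 0; 0; 0; 0; 0; 0; 0; 0; 0; 0];
     [:: -5; -4; -3; 0; -4; 0; -4; -5; -3; 0; -5; 0; 0; -5; 0; 0; -1; 0; -5; 0; 0; 0; -4; 0];
     [:: -5; -3; -3; 0; -3; -1; -3; -5; -3; 0; -5; 0; -1; -4; -1; 0; -1; 0; -4; 0; 0; 0; -4; 0];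
     [:: -5; -4; -4; 0; -1; -1; -4; -6; -2; 0; -5; 0; 0; -4; -2; 0; 0; 0; -4; 0; 0; 0; -6; 0];
     [:: -14; -12; -7; 0; -8; -1; -10; -14; -7; 0; -11; 0; -1; -12; -1; 0; -3; 0; -12; 0; 0; 0; -12; 0];
     [:: 0; 0; 0; 0; 0; 0; 0; 0; 0; 0; 0; 0; 0; 0; 0; 0; 0; 0; 0; 0; 0; 0; 0; 0];
     [:: -9; -8; -4; 0; -5; 0; -7; -9; -4; 0; -7; 0; 0; -8; 0; 0; -2; 0; -8; 0; 0; 0; -8; 0];
     [:: 0; 0; 0; 0; 0; 0; 0; 0; 0; 0; 0; 0; 0; 0; 0; 0; 0; 0; 0; 0; 0; 0; 0; 0];
     [:: 0; 0; 0; 0; 0; 0; 0; 0; 0; 0; 0; 0; 0; 0; 0; 0; 0; 0; 0; 0; 0; 0; 0; 0];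
     [:: 0; 0; 0; 0; 0; 0; 0; 0; 0; 0; 0; 0; 0; 0; 0; 0; 0; 0; 0; 0; 0; 0; 0; 0];
     [:: -13; -11; -9; 0; -6; -2; -10; -14; -6; 0; -13; 0; 0; -11; -3; 0; -2; 0; -11; 0; 0; 0; -14; 0];
     [:: 0; 0; 0; 0; 0; 0; 0; 0; 0; 0; 0; 0; 0; 0; 0; 0; 0; 0; 0; 0; 0; 0; 0; 0];
     [:: -10; -8; -6; 0; -6; -1; -8; -10; -5; 0; -9; 0; 0; -9; -1; 0; -2; 0; -9; 0; 0; 0; -10; 0];
     [:: 0; 0; 0; 0; 0; 0; 0; 0; 0; 0; 0; 0; 0; 0; 0; 0; 0; 0; 0; 0; 0; 0; 0; 0]])%Z.

Definition gens_gram16 : seq (seq int) :=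
  ([:: [:: -32; 24; 32; 16; 32];
     [:: 24; 0; 0; 32; 64];
     [:: 32; 0; -32; 24; 32];
     [:: 16; 32; 24; 32; 80];
     [:: 32; 64; 32; 80; 131]])%Z.

Definition gen_fun (i k : nat) : rat := (tab gens16 k i)%:~R / 16%:R.
Definition gens : 'M[rat]_(24, 5) := mx_of_fun 24 5 gen_fun.
Definition gen (k : nat) : 'cV[rat]_24 := mx_of_fun 24 1 (fun i _ => gen_fun i k).
Definition gen_order (k : nat) : int := nth 0 [:: 2; 2; 2; 2; 16] k.

Definition coords_fun (k i : nat) : rat := (tab dual_coords_tab k i)%:~R.
Definition corr_fun (i j : nat) : rat := (tab dual_corr_tab i j)%:~R.
Definition dual_coords : 'M[rat]_(5, 24) := mx_of_fun 5 24 coords_fun.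
Definition dual_corr : 'M[rat]_24 := mx_of_fun 24 24 corr_fun.

Definition coef_vec (c1 c2 c3 c4 c5 : int) : 'cV[rat]_5 :=
  mx_of_fun 5 1 (fun k _ => (nth 0 [:: c1; c2; c3; c4; c5] k)%:~R).

Lemma gen_col (k : 'I_5) : gen k = col k gens.
Proof. by apply/matrixP => i j; rewrite !mxE. Qed.

Lemma lincomb_gens c1 c2 c3 c4 c5 :
  lincomb (gen 0) (gen 1) (gen 2) (gen 3) (gen 4) c1 c2 c3 c4 c5 =
  gens *m coef_vec c1 c2 c3 c4 c5.
Proof.
rewrite /gens /coef_vec mx_of_funM /lincomb -!scaler_int.
by apply/matrixP => i j; rewrite !mxE /mulf /sum_iota /=; ring.
Qed.

Lemma coef_vecP (v : 'cV[rat]_5) : v \is a mxOver Num.int ->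
  exists c1 c2 c3 c4 c5, v = coef_vec c1 c2 c3 c4 c5.
Proof.
move=> /mxOverP vint; pose c k := Num.floor (v (inord k) 0).
exists (c 0%N), (c 1%N), (c 2%N), (c 3%N), (c 4%N).
apply/matrixP => k j; rewrite mxE (ord1 j) -[k in LHS]inord_val.
by case: k => [[|[|[|[|[|k]]]]] lt_k5] //=; rewrite floorK.
Qed.

Lemma gram_gens_int : gramG *m gens \is a mxOver Num.int.
Proof. by rewrite gramGE mx_of_funM; apply: mx_of_fun_over; vm_compute. Qed.

Lemma gen_dual k : (k < 5)%N -> inDual (gen k).
Proof.
move=> lt_k5 i; rewrite (gen_col (Ordinal lt_k5)) colE mulmxA -colE mxE.
exact: mxOverP gram_gens_int _ _.
Qed.

Lemma gen_order_int (i : 'I_24) k :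
  (k < 5)%N -> (gen_order k)%:~R * gen_fun i k \is a Num.int.
Proof.
have orders : all_entries 24 5 (fun i k => (gen_order k)%:~R * gen_fun i k \is a Num.int).
  by vm_compute.
by move=> lt_k5; apply: (all_entriesP i (Ordinal lt_k5) orders).
Qed.

(* Tabulated as global constants, so that [vm_compute] evaluates them once. *)
Definition pinv_memo : nat -> nat -> rat :=
  memo 24 24 (fun i j => mulf 5 gen_fun coords_fun i j + corr_fun i j).
Definition pinv_gram_memo : nat -> nat -> rat := memo 24 24 (mulf 24 pinv_memo gram_fun).

Lemma gram_generalized_inverse :
  gramG *m (gens *m dual_coords + dual_corr) *m gramG = gramG.
Proof.
rewrite -mulmxA.
have -> : gens *m dual_coords + dual_corr = mx_of_fun 24 24 pinv_memo.
  by rewrite /pinv_memo mx_of_fun_memo mx_of_funM mx_of_funD.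
have -> : mx_of_fun 24 24 pinv_memo *m gramG = mx_of_fun 24 24 pinv_gram_memo.
  by rewrite /pinv_gram_memo mx_of_fun_memo gramGE mx_of_funM.
by rewrite gramGE mx_of_funM; apply: mx_of_fun_eq; vm_compute.
Qed.

Lemma gens_gram :
  gens^T *m gramG *m gens = mx_of_fun 5 5 (fun k l => (tab gens_gram16 k l)%:~R / 16%:R).
Proof.
by rewrite gramGE /gens mx_of_fun_tr !mx_of_funM; apply: mx_of_fun_eq; vm_compute.
Qed.

Lemma dual_mod_gens x : inDual x ->
  exists c1 c2 c3 c4 c5,
    inS (x - lincomb (gen 0) (gen 1) (gen 2) (gen 3) (gen 4) c1 c2 c3 c4 c5).
Proof.
move=> /int_vecP xdual.
have Cint : dual_coords \is a mxOver Num.int.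
  by apply/mxOverP => k i; rewrite mxE intr_int.
have Zint : dual_corr \is a mxOver Num.int.
  by apply/mxOverP => i j; rewrite mxE intr_int.
have [c1 [c2 [c3 [c4 [c5 coefE]]]]] := coef_vecP (mxOverM Cint xdual).
exists c1, c2, c3, c4, c5; rewrite lincomb_gens -coefE; apply/inSP.
exact: dual_mod_span Cint Zint gram_generalized_inverse xdual.
Qed.

Lemma gens_gram_coef (k : 'I_5) c1 c2 c3 c4 c5 :
  (gens^T *m gramG *m gens *m coef_vec c1 c2 c3 c4 c5) k 0 =
  (tab gens_gram16 k 0 * c1 + tab gens_gram16 k 1 * c2 + tab gens_gram16 k 2 * c3
   + tab gens_gram16 k 3 * c4 + tab gens_gram16 k 4 * c5)%:~R / 16%:R.
Proof.
rewrite gens_gram /coef_vec mx_of_funM mxE /mulf /sum_iota /= !intrD !intrM.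
by field.
Qed.

Lemma gens_coef_dvd c1 c2 c3 c4 c5 :
  inS (gens *m coef_vec c1 c2 c3 c4 c5) ->
  [/\ (2 %| c1)%Z, (2 %| c2)%Z, (2 %| c3)%Z, (2 %| c4)%Z & (16 %| c5)%Z].
Proof.
move=> /inSP [z zint radxz].
have := pairing_mod_rad gramG_sym gram_gens_int zint radxz; rewrite mulmxA => gram_int.
have dvd16 k (lt_k5 : (k < 5)%N) :
    (16 %| tab gens_gram16 k 0 * c1 + tab gens_gram16 k 1 * c2 + tab gens_gram16 k 2 * c3
           + tab gens_gram16 k 3 * c4 + tab gens_gram16 k 4 * c5)%Z.
  move: (mxOverP gram_int (Ordinal lt_k5) 0); rewrite gens_gram_coef.
  exact: dvdz_of_int_div.
move: (dvd16 0%N isT) (dvd16 1%N isT) (dvd16 2%N isT) (dvd16 3%N isT) (dvd16 4%N isT).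
by rewrite /tab /= => d0 d1 d2 d3 d4; split; lia.
Qed.

Lemma lincomb_gen_orders_int a1 a2 a3 a4 a5 :
  lincomb (gen 0) (gen 1) (gen 2) (gen 3) (gen 4)
    (a1 * 2) (a2 * 2) (a3 * 2) (a4 * 2) (a5 * 16) \is a mxOver Num.int.
Proof.
apply/mxOverP => i j; rewrite /lincomb -!scaler_int !mxE.
have mult_int k a : (k < 5)%N -> (a * gen_order k)%:~R * gen_fun i k \is a Num.int.
  by move=> lt_k5; rewrite intrM -mulrA rpredM ?intr_int ?gen_order_int.
do 4 (apply: rpredD; last by apply: mult_int).
by apply: mult_int.
Qed.

Lemma gens_relations c1 c2 c3 c4 c5 :
  inS (lincomb (gen 0) (gen 1) (gen 2) (gen 3) (gen 4) c1 c2 c3 c4 c5) <->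
  [/\ (2 %| c1)%Z, (2 %| c2)%Z, (2 %| c3)%Z, (2 %| c4)%Z & (16 %| c5)%Z].
Proof.
split; first by rewrite lincomb_gens; apply: gens_coef_dvd.
case=> /dvdzP [a1 ->] /dvdzP [a2 ->] /dvdzP [a3 ->] /dvdzP [a4 ->] /dvdzP [a5 ->].
apply/inSP; exists (lincomb (gen 0) (gen 1) (gen 2) (gen 3) (gen 4)
                      (a1 * 2) (a2 * 2) (a3 * 2) (a4 * 2) (a5 * 16)).
  exact: lincomb_gen_orders_int.
by rewrite subrr mulmx0.
Qed.

Lemma gens_qform c1 c2 c3 c4 c5 :
  let x := lincomb (gen 0) (gen 1) (gen 2) (gen 3) (gen 4) c1 c2 c3 c4 c5 in
  eqmod2 (bform x x) (Qtarget c1 c2 c3 c4 c5).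
Proof.
rewrite /= /bform lincomb_gens; set c := coef_vec c1 c2 c3 c4 c5.
have -> : (gens *m c)^T *m gramG *m (gens *m c) = c^T *m (gens^T *m gramG *m gens) *m c.
  by rewrite trmx_mul !mulmxA.
rewrite gens_gram /c /coef_vec mx_of_fun_tr !mx_of_funM mxE /mulf /sum_iota /tab /=.
exists (- c1 ^+ 2 - c3 ^+ 2 + c4 ^+ 2 + 4 * c5 ^+ 2 + c1 * c2 + 2 * c1 * c3 + c1 * c4
        + 2 * c1 * c5 + 2 * c2 * c4 + 4 * c2 * c5 + c3 * c4 + 2 * c3 * c5 + 5 * c4 * c5).
by rewrite /Qtarget; field.
Qed.

Theorem proposition4p4 :
  exists g1 g2 g3 g4 g5 : 'cV[rat]_24,
    [/\ inDual g1, inDual g2, inDual g3, inDual g4 & inDual g5] /\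
    (forall x, inDual x ->
       exists c1 c2 c3 c4 c5 : int, inS (x - lincomb g1 g2 g3 g4 g5 c1 c2 c3 c4 c5)) /\
    (forall c1 c2 c3 c4 c5 : int,
       inS (lincomb g1 g2 g3 g4 g5 c1 c2 c3 c4 c5) <->
       [/\ (2 %| c1)%Z, (2 %| c2)%Z, (2 %| c3)%Z, (2 %| c4)%Z & (16 %| c5)%Z]) /\
    (forall c1 c2 c3 c4 c5 : int,
       let x := lincomb g1 g2 g3 g4 g5 c1 c2 c3 c4 c5 in
       eqmod2 (bform x x) (Qtarget c1 c2 c3 c4 c5)).
Proof.
exists (gen 0), (gen 1), (gen 2), (gen 3), (gen 4).
split; first by split; apply: gen_dual.
split; first exact: dual_mod_gens.
split; first exact: gens_relations.
exact: gens_qform.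
Qed.
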